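(* Let $n\ge3$ be odd, $d,R\in\mathbb{Q}$, $d\ne0$, $R$ not a square, $D=d^2-R$, let $\zeta$ be a primitive $n$th root of unity in $\mathbb{C}$ and $K=\mathbb{Q}(\sqrt R(\zeta-\zeta^{-1}))$. Let $u\in\mathbb{C}$ be any zero of $f_n=f_n(Z,d,R)$ and $L\subseteq\mathbb{C}$ the splitting field of $f_n$ over $\mathbb{Q}$. Then $L$ is the composite field $\mathbb{Q}(u)\cdot K$.
   Context: $f_n(Z,d,R)=\sum_{j=0}^{(n-1)/2}(-1)^j\frac{n}{n-j}\binom{n-j}{j}D^jZ^{n-2j}-2dD^{(n-1)/2}$, which equals $\sqrt D^{\,n}F_n(Z/\sqrt D)-2dD^{(n-1)/2}$ where $F_n(Z)=2T_n(Z/2)$ and $T_n$ is the Chebyshev polynomial of the first kind. *)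

(* C is modelled by algC (algebraic closure of Q inside C). *)
From mathcomp Require Import all_boot all_order all_algebra all_field.
Set Implicit Arguments. Unset Strict Implicit. Unset Printing Implicit Defensive.
Import Order.TTheory GRing.Theory Num.Theory.
Local Open Scope ring_scope.

Definition fpoly (n : nat) (d R : rat) : {poly rat} :=
  let D := d ^+ 2 - R in
  \sum_(j < (n.-1)./2.+1)
     (((-1) ^+ j * (n%:R / (n - j)%:R) * ('C(n - j, j))%:R * D ^+ j) *: 'X^(n - 2 * j))
  - (2 * d * D ^+ ((n.-1)./2))%:P.

(* A subfield of algC (as a Prop-valued set); it automatically contains Q. *)
Definition is_subfield (F : algC -> Prop) : Prop :=
  [/\ F 0, F 1,
      (forall x y, F x -> F y -> F (x - y)),
      (forall x y, F x -> F y -> F (x * y)) &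
      (forall x, F x -> F x^-1)].

Definition gen_field (S : algC -> Prop) : algC -> Prop :=
  fun x => forall F, is_subfield F -> (forall y, S y -> F y) -> F x.

Definition splitting_field_in_C (p : {poly rat}) : algC -> Prop :=
  gen_field (fun x => root (map_poly ratr p) x).

Definition compositum (F1 F2 : algC -> Prop) : algC -> Prop :=
  gen_field (fun x => F1 x \/ F2 x).

(* Write n = 2k + 3, D = d^2 - R, and split the root u as u = a + b with a b = D.
   By Dickson's identity f_n(z + w) = z^n + w^n - 2 d D^(k+1) whenever z w = D, so
   a^n, b^n are the roots of Y^2 - 2 d D^(k+1) Y + D^n; hence
   a^n - b^n = +/- 2 D^(k+1) sqrt R, and the roots of f_n are exactly the
   a zeta^i + b zeta^-i and b zeta^i + a zeta^-i.  Since a^n - b^n = (a - b) e with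
   e a symmetric function of a, b (so e in Q(u)), any field containing u contains
   (a - b)(zeta - zeta^-1) iff it contains sqrt R (zeta - zeta^-1).  The first
   element is a difference of two roots, giving K <= L; conversely from u,
   (a - b)(zeta - zeta^-1) and zeta + zeta^-1 (which lies in K because n is odd)
   every root is obtained, giving L <= Q(u) K. *)
From mathcomp Require Import all_boot all_order all_algebra all_field.
From mathcomp Require Import zify ring.
Set Implicit Arguments. Unset Strict Implicit. Unset Printing Implicit Defensive.
Import Order.TTheory GRing.Theory Num.Theory.
Local Open Scope ring_scope.

Section SubfieldClosure.
Variable F : algC -> Prop.
Hypothesis HF : is_subfield F.

Lemma sf0 : F 0. Proof. by case: HF. Qed.
Lemma sf1 : F 1. Proof. by case: HF. Qed.
Lemma sfB x y : F x -> F y -> F (x - y). Proof. by case: HF => _ _ H _ _; apply: H. Qed.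
Lemma sfM x y : F x -> F y -> F (x * y). Proof. by case: HF => _ _ _ H _; apply: H. Qed.
Lemma sfV x : F x -> F x^-1. Proof. by case: HF => _ _ _ _ H; apply: H. Qed.

Lemma sfN x : F x -> F (- x).
Proof. by move=> Fx; rewrite -sub0r; apply: sfB => //; apply: sf0. Qed.

Lemma sfD x y : F x -> F y -> F (x + y).
Proof. by move=> Fx Fy; rewrite -[y]opprK; apply: sfB => //; apply: sfN. Qed.

Lemma sfdiv x y : F x -> F y -> F (x / y).
Proof. by move=> Fx Fy; apply: sfM => //; apply: sfV. Qed.

Lemma sfX x m : F x -> F (x ^+ m).
Proof. by move=> Fx; elim: m => [|m IH]; rewrite ?expr0 ?exprS; [apply: sf1 | apply: sfM]. Qed.

Lemma sf_nat m : F m%:R.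
Proof. by elim: m => [|m IH]; rewrite ?mulrSr; [apply: sf0 | apply: sfD => //; apply: sf1]. Qed.

Lemma sf_rat q : F (ratr q).
Proof.
have sf_int (z : int) : F z%:~R.
  by case: z => m; rewrite ?NegzE ?mulrNz; [| apply: sfN]; apply: sf_nat.
by apply: sfdiv; apply: sf_int.
Qed.

Lemma sf_mulr_iff c y : F c -> c != 0 -> F (y * c) <-> F y.
Proof.
move=> Fc c0; split=> [Fyc | Fy]; last exact: sfM.
by rewrite -(mulfK c0 y); apply: sfdiv.
Qed.

Lemma sf_sqr_iff t c s x : F c -> c != 0 -> t ^+ 2 = (c * s) ^+ 2 ->
  F (t * x) <-> F (s * x).
Proof.
move=> Fc c0 /eqP; rewrite eqf_sqr => /orP[] /eqP ->.
  by rewrite -mulrA mulrC; apply: sf_mulr_iff.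
rewrite mulNr -mulrA mulrC -mulrN.
by apply: sf_mulr_iff; rewrite ?oppr_eq0 //; apply: sfN.
Qed.
End SubfieldClosure.

Arguments sf0 {F} HF. Arguments sf1 {F} HF.
Arguments sfB {F} HF {x y}. Arguments sfM {F} HF {x y}. Arguments sfV {F} HF {x}.
Arguments sfN {F} HF {x}. Arguments sfD {F} HF {x y}. Arguments sfdiv {F} HF {x y}.
Arguments sfX {F} HF {x} m. Arguments sf_nat {F} HF m. Arguments sf_rat {F} HF q.

Lemma gen_field_subfield S : is_subfield (gen_field S).
Proof.
split=> [F HF _|F HF _|x y Fx Fy F HF HS|x y Fx Fy F HF HS|x Fx F HF HS].
- exact: sf0.
- exact: sf1.
- by apply: sfB => //; [apply: Fx | apply: Fy].
- by apply: sfM => //; [apply: Fx | apply: Fy].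
- by apply: sfV => //; apply: Fx.
Qed.

Lemma gen_field_in (S : algC -> Prop) x : S x -> gen_field S x.
Proof. by move=> Sx F _ HS; apply: HS. Qed.

Lemma gen_field_min (S F : algC -> Prop) : is_subfield F ->
  (forall y, S y -> F y) -> forall y, gen_field S y -> F y.
Proof. by move=> HF HS y Gy; apply: Gy. Qed.

Lemma gen_field1_min (v : algC) (F : algC -> Prop) : is_subfield F ->
  F v -> forall y, gen_field (fun z => z = v) y -> F y.
Proof. by move=> HF Fv; apply: gen_field_min => // z ->. Qed.

Section LinearRecurrence.
Variable R : comPzRingType.

Definition lin_rec (S P : R) (s : nat -> R) : Prop :=
  forall m, s m.+2 = S * s m.+1 - P * s m.

Lemma lin_rec_eq S P s t : lin_rec S P s -> lin_rec S P t ->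
  s 0%N = t 0%N -> s 1%N = t 1%N -> forall m, s m = t m.
Proof.
move=> rs rt e0 e1 m.
suff [] : s m = t m /\ s m.+1 = t m.+1 by [].
elim: m => [|m [IH1 IH2]]; first by [].
by split=> //; rewrite rs rt IH1 IH2.
Qed.

(* The Lucas sequence U_(m+1)(S, P) in closed form (a Chebyshev polynomial of
   the second kind): when S = z + w and P = z w it equals
   z^m + z^(m-1) w + ... + w^m. *)
Definition lucasU (m : nat) (S P : R) : R :=
  \sum_(j < m.+1) ('C(m - j, j))%:R * (- P) ^+ j * S ^+ (m - 2 * j).

Lemma lucasU0 S P : lucasU 0 S P = 1.
Proof. by rewrite /lucasU big_ord1 /= bin0 mulr1 expr0 mulr1. Qed.

Lemma lucasU1 S P : lucasU 1 S P = S.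
Proof.
rewrite /lucasU big_ord_recr big_ord1 /= subnn bin0 bin0n.
by rewrite !mul0r addr0 expr0 !mul1r expr1.
Qed.

(* Pascal's rule for the coefficients gives the defining recurrence. *)
Lemma lucasU_rec m S P :
  lucasU m.+2 S P = S * lucasU m.+1 S P - P * lucasU m S P.
Proof.
rewrite /lucasU big_ord_recl [X in S * X]big_ord_recl /= !bin0 !expr0 !mul1r.
rewrite mulrDr -exprS !subn0 -addrA; congr (_ + _).
rewrite big_ord_recr /= /bump /= add1n subnn bin0n mul0r mul0r addr0.
rewrite !mulr_sumr -sumrB; apply: eq_bigr => [[j Hj]] _ /=.
rewrite /bump /= !add1n.
have Hc : 'C(m.+2 - j.+1, j.+1) = ('C(m - j, j.+1) + 'C(m - j, j))%N.
  rewrite subSS; have -> : (m.+1 - j = (m - j).+1)%N by lia.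
  by rewrite binS.
rewrite Hc natrD !exprS.
have -> : (m.+2 - 2 * j.+1 = m - 2 * j)%N by lia.
have -> : (m.+1 - j.+1 = m - j)%N by lia.
case: (ltnP (2 * j) m) => H.
  have -> : (m.+1 - 2 * j.+1 = (m - 2 * j).-1)%N by lia.
  have -> : S ^+ (m - 2 * j) = S * S ^+ (m - 2 * j).-1.
    by rewrite -exprS prednK //; lia.
  ring.
rewrite (@bin_small (m - j) j.+1); last by lia.
rewrite mul0r add0r; ring.
Qed.

Lemma lucasU_diff m (z w : R) :
  z ^+ m.+1 - w ^+ m.+1 = (z - w) * lucasU m (z + w) (z * w).
Proof.
apply: (lin_rec_eq (S := z + w) (P := z * w)
                   (s := fun i => z ^+ i.+1 - w ^+ i.+1)
                   (t := fun i => (z - w) * lucasU i (z + w) (z * w))).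
- by move=> i; rewrite !exprS; ring.
- by move=> i /=; rewrite lucasU_rec; ring.
- by rewrite lucasU0 mulr1 !expr1.
- by rewrite lucasU1 !expr2; ring.
Qed.

Lemma dickson m (z w : R) :
  z ^+ m.+2 + w ^+ m.+2 =
  lucasU m.+2 (z + w) (z * w) - (z * w) * lucasU m (z + w) (z * w).
Proof.
apply: (lin_rec_eq (S := z + w) (P := z * w)
                   (s := fun i => z ^+ i.+2 + w ^+ i.+2)
  (t := fun i => lucasU i.+2 (z + w) (z * w) - (z * w) * lucasU i (z + w) (z * w))).
- by move=> i; rewrite !exprS; ring.
- by move=> i /=; rewrite !lucasU_rec; ring.
- by rewrite !lucasU_rec lucasU0 lucasU1; ring.
- by rewrite !lucasU_rec lucasU0 lucasU1; ring.
Qed.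
End LinearRecurrence.

Section SymmetricPowers.
Variable F : algC -> Prop.
Hypothesis HF : is_subfield F.

Lemma lin_rec_closed S P s : lin_rec S P s -> F S -> F P ->
  F (s 0%N) -> F (s 1%N) -> forall m, F (s m).
Proof.
move=> rs FS FP F0 F1 m.
suff [] : F (s m) /\ F (s m.+1) by [].
elim: m => [|m [IH1 IH2]]; first by [].
by split=> //; rewrite rs; apply: (sfB HF); apply: (sfM HF).
Qed.

Lemma power_sum_closed z w m : F (z + w) -> F (z * w) -> F (z ^+ m + w ^+ m).
Proof.
move=> Fs Fp.
apply: (lin_rec_closed (S := z + w) (P := z * w) (s := fun i => z ^+ i + w ^+ i)) => //.
- by move=> i; rewrite !exprS; ring.
- by rewrite !expr0 -(natrD _ 1 1); apply: sf_nat.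
Qed.

Lemma power_diff_factor z w m : F (z + w) -> F (z * w) ->
  exists2 e, F e & z ^+ m - w ^+ m = (z - w) * e.
Proof.
move=> Fs Fp; case: m => [|m].
  by exists 0; [apply: sf0 | rewrite !expr0 subrr mulr0].
exists (lucasU m (z + w) (z * w)); last exact: lucasU_diff.
apply: (lin_rec_closed (S := z + w) (P := z * w)
                       (s := fun i => lucasU i (z + w) (z * w))) => //.
- by move=> i; apply: lucasU_rec.
- by rewrite lucasU0; apply: sf1.
- by rewrite lucasU1.
Qed.
End SymmetricPowers.

(* Coefficient of the Dickson polynomial:
   n C(n-j, j) = (n - j) (C(n-j, j) + C(n-j-1, j-1)), the second term absent for j = 0. *)
Definition dickson_coef (n j : nat) : nat :=
  'C(n - j, j) + (if j is i.+1 then 'C(n - j - 1, i) else 0).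

Lemma dickson_coefE n j : (j <= n)%N -> (n * 'C(n - j, j) = (n - j) * dickson_coef n j)%N.
Proof.
rewrite /dickson_coef; case: j => [|i] Hj; first by rewrite subn0 addn0.
have := mul_bin_diag (n - i.+1) i.
have -> : ((n - i.+1).-1 = n - i.+1 - 1)%N by lia.
move=> E; rewrite mulnDr E; set c := 'C(_, _); rewrite -mulnDl; congr (_ * _)%N; lia.
Qed.

(* Expanded form of Dickson's identity: z^n + w^n is the Dickson polynomial
   sum_j dickson_coef n j (-P)^j S^(n-2j) evaluated at S = z + w, P = z w. *)
Lemma dickson_expand (R : comPzRingType) m (S P : R) :
  lucasU m.+2 S P - P * lucasU m S P =
  \sum_(j < m.+3) (dickson_coef m.+2 j)%:R * (- P) ^+ j * S ^+ (m.+2 - 2 * j).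
Proof.
rewrite /dickson_coef; under eq_bigr do rewrite natrD !mulrDl.
rewrite big_split /=; congr (_ + _).
rewrite big_ord_recl /= mul0r mul0r add0r big_ord_recr /= /bump /=.
rewrite [X in _ = _ + X](_ : _ = 0); last by rewrite bin_small ?mul0r //; lia.
rewrite addr0 /lucasU mulr_sumr -sumrN; apply: eq_bigr => [[i Hi]] _ /=.
rewrite /bump /= add1n.
have -> : (m.+2 - i.+1 - 1 = m - i)%N by lia.
have -> : (m.+2 - 2 * i.+1 = m - 2 * i)%N by lia.
rewrite exprS; ring.
Qed.

Lemma fpoly_eval k (d R : rat) (z w : algC) :
  z * w = ratr (d ^+ 2 - R) ->
  (map_poly ratr (fpoly (2 * k).+3 d R)).[z + w] =
  z ^+ (2 * k).+3 + w ^+ (2 * k).+3 - 2 * ratr d * (ratr (d ^+ 2 - R)) ^+ k.+1.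
Proof.
move=> Hzw; set n := (2 * k).+3.
have half_n : ((n.-1)./2 = k.+1)%N by rewrite /n /= mul2n doubleK.
rewrite /fpoly half_n rmorphB rmorph_sum /= hornerD hornerN horner_sum map_polyC hornerC.
rewrite /= !rmorphM /= rmorphXn /= rmorphMn /= rmorph1 -Hzw; congr (_ - _).
rewrite (dickson (2 * k).+1 z w) dickson_expand -/n Hzw.
set S := z + w; set P : algC := ratr (d ^+ 2 - R).
rewrite (big_ord_widen n.+1 (fun i => (map_poly ratr
        (((-1) ^+ i * (n%:R / (n - i)%:R) * 'C(n - i, i)%:R *
          (d ^+ 2 - R) ^+ i) *: 'X^(n - 2 * i))).[S])); last by rewrite /n; lia.
rewrite big_mkcond /=; apply: eq_bigr => [[j Hj]] _ /=.
case: ifP => Hjk.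
  rewrite map_polyZ /= map_polyXn hornerZ hornerXn.
  rewrite !rmorphM /= !rmorphXn /= rmorphN1 fmorphV /= !ratr_nat -/P [(- P) ^+ j]exprNn.
  have Hn0 : (n - j)%:R != 0 :> algC by rewrite pnatr_eq0 /n; lia.
  have Hjn : (j <= n)%N by rewrite /n; lia.
  have /(congr1 (fun x => x%:R : algC)) := dickson_coefE Hjn; rewrite !natrM => E.
  have Ecoef : n%:R / (n - j)%:R * ('C(n - j, j))%:R = (dickson_coef n j)%:R :> algC.
    by rewrite mulrAC E mulrAC divff // mul1r.
  rewrite -Ecoef; ring.
rewrite /dickson_coef (@bin_small (n - j) j); last by rewrite /n; lia.
case: j Hj Hjk => [|i] Hj Hjk //=.
rewrite bin_small ?mul0r //; rewrite /n; lia.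
Qed.

Lemma sum_prod_split (v P : algC) : exists a b, a + b = v /\ a * b = P.
Proof.
set dl := sqrtC (v ^+ 2 - 4 * P).
exists ((v + dl) / 2), ((v - dl) / 2).
have two_neq0 : (2 : algC) != 0 by rewrite pnatr_eq0.
split; first by field.
have dl2 : dl ^+ 2 = v ^+ 2 - 4 * P by rewrite sqrtCK.
have -> : (v + dl) / 2 * ((v - dl) / 2) = (v ^+ 2 - dl ^+ 2) / 4 by field.
by rewrite dl2; field.
Qed.

Lemma unity_root_neq0 (R : nzRingType) n (z : R) : (0 < n)%N -> z ^+ n = 1 -> z != 0.
Proof.
move=> n_gt0 z_n; apply/eqP => z0; move: z_n.
by rewrite z0 expr0n eqn0Ngt n_gt0 /= => /esym/eqP; rewrite oner_eq0.
Qed.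

Lemma prim_root_pair n (zeta al be p q : algC) : n.-primitive_root zeta ->
  p != 0 -> al ^+ n = p ^+ n -> al * be = p * q ->
  exists i, al = p * zeta ^+ i /\ be = q * zeta^-1 ^+ i.
Proof.
move=> prim p0 al_n al_be.
have zeta0 := unity_root_neq0 (prim_order_gt0 prim) (prim_expr_order prim).
have /(prim_rootP prim) [i al_p] : (al / p) ^+ n = 1.
  by rewrite expr_div_n al_n divff // expf_neq0.
have al_eq : al = p * zeta ^+ i by rewrite -al_p mulrC divfK.
exists i; split=> //.
have be_q : zeta ^+ i * be = q by apply: (mulfI p0); rewrite mulrA -al_eq.
have zeta_inv : zeta^-1 ^+ i * zeta ^+ i = 1 by rewrite -exprMn mulVf // expr1n.
by rewrite -be_q mulrAC [zeta ^+ i * _]mulrC zeta_inv mul1r.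
Qed.

(* For zeta^n = 1 with n odd, zeta + zeta^-1 is a polynomial in (zeta - zeta^-1)^2:
   it is the power sum of zeta^2 and zeta^-2 of order (n+1)/2. *)
Lemma half_trace_mem (F : algC -> Prop) n (zeta : algC) : is_subfield F ->
  odd n -> zeta ^+ n = 1 -> F ((zeta - zeta^-1) ^+ 2) -> F (zeta + zeta^-1).
Proof.
move=> HF odd_n zeta_n Fx2.
have zeta0 : zeta != 0 by apply: unity_root_neq0 zeta_n; case: n odd_n.
have zeta_inv : zeta * zeta^-1 = 1 by rewrite divff.
have Fc2 : F ((zeta + zeta^-1) ^+ 2).
  have -> : (zeta + zeta^-1) ^+ 2 = (zeta - zeta^-1) ^+ 2 + 4 * (zeta * zeta^-1) by ring.
  by rewrite zeta_inv mulr1; apply: (sfD HF) => //; apply: sf_nat.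
have Fs2 : F (zeta ^+ 2 + zeta^-1 ^+ 2).
  have -> : zeta ^+ 2 + zeta^-1 ^+ 2 = (zeta + zeta^-1) ^+ 2 - 2 * (zeta * zeta^-1) by ring.
  by rewrite zeta_inv mulr1; apply: (sfB HF) => //; apply: sf_nat.
have Fp2 : F (zeta ^+ 2 * zeta^-1 ^+ 2) by rewrite -exprMn zeta_inv expr1n; apply: sf1.
have half_pow y : y ^+ n = 1 -> (y ^+ 2) ^+ n./2.+1 = y.
  move=> y_n; rewrite -exprM -[in RHS](mul1r y) -y_n -exprSr; congr (_ ^+ _).
  by rewrite -[in RHS](odd_double_half n) odd_n mul2n.
have := power_sum_closed HF n./2.+1 Fs2 Fp2.
by rewrite !half_pow // exprVn zeta_n invr1.
Qed.

(* With zeta + zeta^-1, p + q and (p - q)(zeta - zeta^-1) in F, every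
   p zeta^i + q zeta^-i is in F: it is half of
   (p + q)(zeta^i + zeta^-i) + (p - q)(zeta - zeta^-1) e_i with e_i in F. *)
Lemma rot_comb_mem (F : algC -> Prop) (zeta p q : algC) i : is_subfield F ->
  zeta != 0 -> F (zeta + zeta^-1) -> F (p + q) -> F ((p - q) * (zeta - zeta^-1)) ->
  F (p * zeta ^+ i + q * zeta^-1 ^+ i).
Proof.
move=> HF zeta0 Fc Fpq Fpqx.
have F1 : F (zeta * zeta^-1) by rewrite divff //; apply: sf1.
have Fsum := power_sum_closed HF i Fc F1.
have [e Fe e_diff] := power_diff_factor HF i Fc F1.
have -> : p * zeta ^+ i + q * zeta^-1 ^+ i =
    ((p + q) * (zeta ^+ i + zeta^-1 ^+ i) + (p - q) * (zeta ^+ i - zeta^-1 ^+ i)) / 2.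
  by field.
rewrite e_diff mulrA; apply: (sfdiv HF); last exact: sf_nat.
by apply: (sfD HF); apply: (sfM HF).
Qed.

Section SplittingField.
Variables (k : nat) (d R : rat) (zeta a b : algC).
Local Notation n := (2 * k).+3.
Local Notation f := (map_poly ratr (fpoly n d R)).
Local Notation D := (ratr (d ^+ 2 - R) : algC).
Local Notation sqrtR := (sqrtC (ratr R) : algC).
Local Notation x := (zeta - zeta^-1).

Hypothesis R_nonsquare : ~ exists q : rat, q ^+ 2 = R.
Hypothesis zeta_prim : n.-primitive_root zeta.
Hypothesis ab_prod : a * b = D.
Hypothesis ab_root : root f (a + b).

Lemma D_neq0 : D != 0.
Proof.
by rewrite fmorph_eq0 subr_eq0; apply/eqP => dR; apply: R_nonsquare; exists d.
Qed.

Lemma ratrR_neq0 : (ratr R : algC) != 0.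
Proof.
by rewrite fmorph_eq0; apply/eqP => R0; apply: R_nonsquare; exists 0; rewrite R0 expr0n.
Qed.

Lemma root_fpoly_sum z w : z * w = D ->
  root f (z + w) = (z ^+ n + w ^+ n == 2 * ratr d * D ^+ k.+1).
Proof. by move=> zw; rewrite /root fpoly_eval // subr_eq0. Qed.

Lemma ab_pow_sum : a ^+ n + b ^+ n = 2 * ratr d * D ^+ k.+1.
Proof. by apply/eqP; rewrite -root_fpoly_sum. Qed.

Lemma a_neq0 : a != 0.
Proof. by apply: contraNneq D_neq0 => a0; rewrite -ab_prod a0 mul0r. Qed.

Lemma b_neq0 : b != 0.
Proof. by apply: contraNneq D_neq0 => b0; rewrite -ab_prod b0 mulr0. Qed.

(* a^n and b^n are the roots of Y^2 - 2 d D^(k+1) Y + D^n, whose discriminant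
   is 4 D^(2k+2) (d^2 - D) = 4 D^(2k+2) R; so a^n - b^n = +/- 2 D^(k+1) sqrt R. *)
Lemma ab_pow_diff_sqr : (a ^+ n - b ^+ n) ^+ 2 = (2 * D ^+ k.+1 * sqrtR) ^+ 2.
Proof.
have -> : (a ^+ n - b ^+ n) ^+ 2 = (a ^+ n + b ^+ n) ^+ 2 - 4 * (a * b) ^+ n.
  by rewrite exprMn; ring.
rewrite ab_pow_sum ab_prod [RHS]exprMn sqrtCK.
have -> : (ratr R : algC) = ratr d ^+ 2 - D by rewrite rmorphB rmorphXn /=; ring.
have -> : D ^+ n = (D ^+ k.+1) ^+ 2 * D by rewrite -exprM -exprSr; congr (_ ^+ _); lia.
ring.
Qed.

Lemma root_fpoly_form v : root f v ->
  exists i, v = a * zeta ^+ i + b * zeta^-1 ^+ i \/ v = b * zeta ^+ i + a * zeta^-1 ^+ i.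
Proof.
have [al [be [v_eq al_be]]] := sum_prod_split v D.
rewrite -v_eq root_fpoly_sum // => /eqP al_be_n.
have : (al ^+ n - a ^+ n) * (al ^+ n - b ^+ n) = 0.
  have -> : (al ^+ n - a ^+ n) * (al ^+ n - b ^+ n) =
      al ^+ n * (al ^+ n + be ^+ n) - al ^+ n * (a ^+ n + b ^+ n)
      + (a * b) ^+ n - (al * be) ^+ n by rewrite !exprMn; ring.
  by rewrite al_be_n ab_pow_sum ab_prod al_be; ring.
move/eqP; rewrite mulf_eq0 !subr_eq0 => /orP[] /eqP al_n.
  have al_be_ab : al * be = a * b by rewrite al_be ab_prod.
  have [i [-> ->]] := prim_root_pair zeta_prim a_neq0 al_n al_be_ab.
  by exists i; left.
have al_be_ba : al * be = b * a by rewrite al_be -ab_prod mulrC.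
have [i [-> ->]] := prim_root_pair zeta_prim b_neq0 al_n al_be_ba.
by exists i; right.
Qed.

Lemma root_fpoly_rot p q : p * q = D -> p ^+ n + q ^+ n = 2 * ratr d * D ^+ k.+1 ->
  root f (p * zeta + q * zeta^-1).
Proof.
have zeta_n := prim_expr_order zeta_prim.
have zeta0 := unity_root_neq0 (prim_order_gt0 zeta_prim) zeta_n.
move=> pq pq_n; rewrite root_fpoly_sum.
  by rewrite 2!exprMn zeta_n exprVn zeta_n invr1 !mulr1 pq_n.
by rewrite mulrACA divff // mulr1.
Qed.

(* Key step: over any subfield containing a + b, (a - b)(zeta - zeta^-1) and
   sqrt R (zeta - zeta^-1) generate each other, because
   a^n - b^n = (a - b) e with e a nonzero symmetric function of a, b. *)
Lemma diff_theta_iff (F : algC -> Prop) : is_subfield F -> F (a + b) ->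
  F ((a - b) * x) <-> F (sqrtR * x).
Proof.
move=> HF Fab.
have Fprod : F (a * b) by rewrite ab_prod; apply: sf_rat.
have [e Fe ab_n] := power_diff_factor HF n Fab Fprod.
have c_neq0 : 2 * D ^+ k.+1 * sqrtR != 0.
  rewrite !mulf_neq0 ?expf_neq0 ?pnatr_eq0 ?D_neq0 //.
  by rewrite sqrtC_eq0 ratrR_neq0.
have e_neq0 : e != 0.
  apply: contra_neq c_neq0 => e0; apply/eqP; rewrite -sqrf_eq0 -ab_pow_diff_sqr.
  by rewrite ab_n e0 mulr0 expr0n.
rewrite -(sf_mulr_iff HF _ Fe e_neq0) mulrAC -ab_n.
apply: (sf_sqr_iff HF x _ _ ab_pow_diff_sqr).
  by apply: (sfM HF); [apply: sf_nat | apply: (sfX HF _ (sf_rat HF _))].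
by rewrite mulf_neq0 ?expf_neq0 ?pnatr_eq0 ?D_neq0.
Qed.

Lemma splitting_field_compositum y :
  splitting_field_in_C (fpoly n d R) y <->
  compositum (gen_field (fun z => z = a + b)) (gen_field (fun z => z = sqrtR * x)) y.
Proof.
have zeta0 := unity_root_neq0 (prim_order_gt0 zeta_prim) (prim_expr_order zeta_prim).
split; apply: gen_field_min; try exact: gen_field_subfield.
- set Fc := compositum _ _; have HFc : is_subfield Fc by apply: gen_field_subfield.
  have Fc_ab : Fc (a + b) by apply: gen_field_in; left; apply: gen_field_in.
  have Fc_theta : Fc (sqrtR * x) by apply: gen_field_in; right; apply: gen_field_in.
  have Fc_abx : Fc ((a - b) * x) by apply/(diff_theta_iff HFc).
  have Fc_trace : Fc (zeta + zeta^-1).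
    apply: (half_trace_mem HFc _ (prim_expr_order zeta_prim)); first by rewrite /= mul2n odd_double.
    have -> : x ^+ 2 = (sqrtR * x) ^+ 2 / ratr R.
      by rewrite exprMn sqrtCK; field; rewrite ratrR_neq0 zeta0.
    by apply: (sfdiv HFc); [apply: (sfX HFc 2 Fc_theta) | apply: sf_rat].
  move=> v /root_fpoly_form [i [->|->]]; apply: (rot_comb_mem i HFc zeta0 Fc_trace) => //.
    by rewrite addrC.
  by rewrite -opprB mulNr; apply: (sfN HFc).
- set L := splitting_field_in_C _; have HL : is_subfield L by apply: gen_field_subfield.
  have L_ab : L (a + b) by apply: gen_field_in.
  have L_abx : L ((a - b) * x).
    have -> : (a - b) * x = (a * zeta + b * zeta^-1) - (b * zeta + a * zeta^-1) by ring.
    have root_ab : root f (a * zeta + b * zeta^-1).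
      by apply: root_fpoly_rot; [apply: ab_prod | apply: ab_pow_sum].
    have root_ba : root f (b * zeta + a * zeta^-1).
      by apply: root_fpoly_rot; [rewrite mulrC ab_prod | rewrite addrC ab_pow_sum].
    by apply: (sfB HL); apply: gen_field_in.
  move=> z [|]; apply: gen_field1_min => //.
  by apply/(diff_theta_iff HL).
Qed.
End SplittingField.

Theorem proposition2 (n : nat) (d R : rat) (zeta u : algC) :
  (3 <= n)%N -> odd n -> d != 0 -> ~ (exists q : rat, q ^+ 2 = R) ->
  n.-primitive_root zeta ->
  root (map_poly ratr (fpoly n d R)) u ->
  let K := gen_field (fun x => x = sqrtC (ratr R) * (zeta - zeta^-1)) in
  let Qu := gen_field (fun x => x = u) in
  forall x, splitting_field_in_C (fpoly n d R) x <-> compositum Qu K x.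
Proof.
move=> n_ge3 odd_n _ R_nonsquare zeta_prim u_root K Qu y.
have [k n_eq] : exists k, n = (2 * k).+3.
  by exists (n./2).-1; have := odd_double_half n; rewrite odd_n -mul2n; lia.
subst n.
have [a [b [ab_sum ab_prod]]] := sum_prod_split u (ratr (d ^+ 2 - R)).
subst u.
exact: splitting_field_compositum.
Qed.
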